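(* Assume (A3) and (A4), and let $\rho\in[0,\epsilon]$. Then for all $x\in R\mathbb{B}$, $$\mathrm{dist}(x,\mathcal{X}_\rho)\le\frac{1}{\sigma}[g(x)+\rho]_+ .$$
   Context: Let $g:\mathbb{R}^d\to\mathbb{R}$ be convex with subdifferential $\partial g(x)$. Let $R>0$ and $\mathbb{B}=\{x\in\mathbb{R}^d:\|x\|\le1\}$, with $\|\cdot\|$ the Euclidean norm. Set $\mathcal{X}=\{x:g(x)\le0\}$ and assume $\mathcal{X}\subseteq R\mathbb{B}$. For $\rho\ge0$ set $\mathcal{X}_\rho=\{x:g(x)\le-\rho\}$. Write $\mathrm{dist}(z,\mathcal{Y})=\min_{y\in\mathcal{Y}}\|z-y\|$ and $[a]_+=\max(a,0)$. Assumptions: (A3) there is $G_g>0$ with $\|s\|\le G_g$ for all $s\in\partial g(x)$ and all $x\in R\mathbb{B}$; (A4) there are $\sigma,\epsilon>0$ such that $\{x:g(x)=-\epsilon\}$ is nonempty and $\|s\|\ge\sigma$ for all $s\in\partial g(x)$ whenever $g(x)=-\epsilon$. *)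

From HB Require Import structures.
From mathcomp Require Import all_boot all_order all_algebra.
From mathcomp Require Import all_classical all_reals.
Set Implicit Arguments. Unset Strict Implicit. Unset Printing Implicit Defensive.
Import Order.TTheory GRing.Theory Num.Theory.
Local Open Scope ring_scope.
Local Open Scope classical_set_scope.

Section Defs.
Variables (R : realType) (d : nat).

Definition dotp (u v : 'rV[R]_d) : R := \sum_(i < d) u ord0 i * v ord0 i.
Definition enorm (u : 'rV[R]_d) : R := Num.sqrt (dotp u u).

Definition convex_fun (g : 'rV[R]_d -> R) : Prop :=
  forall (x y : 'rV[R]_d) (t : R), 0 <= t -> t <= 1 ->
    g (t *: x + (1 - t) *: y) <= t * g x + (1 - t) * g y.

Definition subgrad (g : 'rV[R]_d -> R) (x s : 'rV[R]_d) : Prop :=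
  forall y : 'rV[R]_d, g x + dotp s (y - x) <= g y.

Definition sublevel (g : 'rV[R]_d -> R) (rho : R) : set 'rV[R]_d :=
  [set x | g x <= - rho].

(* Euclidean distance from z to a set Y (infimum; attained for closed nonempty Y) *)
Definition dist (z : 'rV[R]_d) (Y : set 'rV[R]_d) : R :=
  inf [set enorm (z - y) | y in Y].

End Defs.

From HB Require Import structures.
From mathcomp Require Import all_boot all_order all_algebra.
From mathcomp Require Import all_classical all_reals.
From mathcomp Require Import topology normedtype derive.
From mathcomp Require Import ring lra.
Import Order.TTheory GRing.Theory Num.Theory.
Set Implicit Arguments. Unset Strict Implicit.
Local Open Scope classical_set_scope.
Local Open Scope ring_scope.

(* Let w be the point of X_eps nearest to x, with g x > -eps, and u := x - w.
   Convexity forces g w = -eps and g >= -eps on the half-space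
   <u, z - w> >= 0; comparing the slopes (g z + eps) / <u, z - w> on both
   sides of the hyperplane <u, z - w> = 0 shows that lam *: u is a
   subgradient at w, where lam is the infimum of these slopes, and taking
   z = x gives lam |u|^2 <= g x + eps.  By (A4), sigma |u| <= lam |u|^2, so
   |x - w| <= (g x + eps) / sigma; the point of the segment [x, w] at which
   the convex bound for g reaches -rho is then within (g x + rho) / sigma
   of x.  The nearest point exists because convex functions on R^d are
   continuous, so sublevel sets are closed. *)

Section Dotp.
Variables (R : realType) (d : nat).
Implicit Types u v w : 'rV[R]_d.

Lemma dotpC u v : dotp u v = dotp v u.
Proof. by apply: eq_bigr => i _; rewrite mulrC. Qed.

Lemma dotpDl u v w : dotp (u + v) w = dotp u w + dotp v w.
Proof. by rewrite /dotp -big_split; apply: eq_bigr => i _; rewrite !mxE mulrDl. Qed.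

Lemma dotpZl a u v : dotp (a *: u) v = a * dotp u v.
Proof. by rewrite /dotp mulr_sumr; apply: eq_bigr => i _; rewrite !mxE mulrA. Qed.

Lemma dotpBl u v w : dotp (u - v) w = dotp u w - dotp v w.
Proof. by rewrite dotpDl -scaleN1r dotpZl mulN1r. Qed.

Lemma dotpDr u v w : dotp w (u + v) = dotp w u + dotp w v.
Proof. by rewrite dotpC dotpDl !(dotpC w). Qed.

Lemma dotpZr a u v : dotp v (a *: u) = a * dotp v u.
Proof. by rewrite dotpC dotpZl dotpC. Qed.

Lemma dotpBr u v w : dotp w (u - v) = dotp w u - dotp w v.
Proof. by rewrite dotpC dotpBl !(dotpC w). Qed.

Lemma dotpp_coord_le u i : u 0 i * u 0 i <= dotp u u.
Proof.
by rewrite /dotp (bigD1 i) //= lerDl; apply: sumr_ge0 => j _; rewrite -expr2 sqr_ge0.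
Qed.

Lemma dotpp_ge0 u : 0 <= dotp u u.
Proof. by apply: sumr_ge0 => i _; rewrite -expr2 sqr_ge0. Qed.

Lemma dotpp_gt0 u : u != 0 -> 0 < dotp u u.
Proof.
move=> u0; have [i ui] : exists i, u 0 i != 0.
  apply/existsP; apply: contraR u0 => /existsPn u0; apply/eqP/rowP => i.
  by rewrite mxE; move/negPn/eqP: (u0 i).
apply: lt_le_trans (dotpp_coord_le u i).
by rewrite -expr2 lt_neqAle sqr_ge0 andbT eq_sym sqrf_eq0.
Qed.

Lemma dotpp_subrZ u v t :
  dotp (u - t *: v) (u - t *: v) = dotp u u - 2 * t * dotp u v + t ^+ 2 * dotp v v.
Proof. by rewrite dotpBl !dotpBr !dotpZl !dotpZr (dotpC v u); ring. Qed.

Lemma enorm_ge0 u : 0 <= enorm u.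
Proof. exact: sqrtr_ge0. Qed.

Lemma enorm0 : enorm (0 : 'rV[R]_d) = 0.
Proof. by rewrite /enorm /dotp big1 ?sqrtr0 // => i _; rewrite mxE mul0r. Qed.

Lemma enorm_sqr u : enorm u ^+ 2 = dotp u u.
Proof. by rewrite /enorm sqr_sqrtr // dotpp_ge0. Qed.

Lemma enormZ a u : enorm (a *: u) = `|a| * enorm u.
Proof.
by rewrite /enorm dotpZl dotpZr mulrA -expr2 sqrtrM ?sqr_ge0 // sqrtr_sqr.
Qed.

Lemma dist_le_enorm x y (Y : set 'rV[R]_d) : Y y -> dist x Y <= enorm (x - y).
Proof.
move=> Yy; apply: ge_inf; last by exists y.
by exists 0 => r [z _ <-]; exact: enorm_ge0.
Qed.

End Dotp.

Section ConvexSegment.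
Variables (R : realType) (d : nat) (g : 'rV[R]_d -> R).
Hypothesis g_convex : convex_fun g.

Lemma convex_segment_le a b t : 0 <= t -> t <= 1 ->
  g (a + t *: (b - a)) <= g a + t * (g b - g a).
Proof.
move=> t0 t1; have -> : a + t *: (b - a) = t *: b + (1 - t) *: a.
  by rewrite scalerBr scalerBl scale1r addrCA.
by apply: le_trans (g_convex b a t0 t1) _; lra.
Qed.

Lemma convex_segment_lt a b c : g a < c ->
  exists t, 0 < t <= 1 /\ g (a + t *: (b - a)) < c.
Proof.
move=> ac; set k := c - g a; set D := `|g b - g a|.
have k0 : 0 < k by rewrite subr_gt0.
have D0 : 0 <= D := normr_ge0 _.
have kD : 0 < k + 2 * D by lra.
have t0 : 0 < k / (k + 2 * D) by rewrite divr_gt0.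
have t1 : k / (k + 2 * D) <= 1 by rewrite ler_pdivrMr // mul1r; lra.
exists (k / (k + 2 * D)); split; first by rewrite t0.
have := convex_segment_le a b (ltW t0) t1.
have : k / (k + 2 * D) * (g b - g a) <= k / (k + 2 * D) * D.
  by rewrite ler_wpM2l ?(ltW t0) // ler_norm.
have : k / (k + 2 * D) * D < k.
  rewrite mulrAC ltr_pdivrMr //.
  have := mulr_ge0 (ltW k0) D0.
  nra.
rewrite /k; lra.
Qed.

Lemma convex_avg_le n (p : 'I_n.+1 -> 'rV[R]_d) M : (forall i, g (p i) <= M) ->
  g (n.+1%:R^-1 *: \sum_(i < n.+1) p i) <= M.
Proof.
elim: n p => [|n IH] p pM; first by rewrite big_ord1 invr1 scale1r.
rewrite big_ord_recr /=; set S := \sum_(i < n.+1) _.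
set t : R := n.+1%:R / n.+2%:R.
have n2 : n.+2%:R != 0 :> R by rewrite pnatr_eq0.
have -> : n.+2%:R^-1 *: (S + p ord_max) =
          t *: (n.+1%:R^-1 *: S) + (1 - t) *: p ord_max.
  have -> : 1 - t = n.+2%:R^-1.
    by apply: (mulfI n2); rewrite mulrBr mulfV // /t mulrCA mulfV // mulr1 -natr1; ring.
  by rewrite scalerA /t mulrAC divff ?pnatr_eq0 // mul1r scalerDr.
have t0 : 0 <= t by rewrite divr_ge0 // ler0n.
have t1 : t <= 1 by rewrite ler_pdivrMr ?ltr0n // mul1r ler_nat.
apply: (le_trans (g_convex _ _ t0 t1)).
have := IH (fun i => p (widen_ord (leqnSn n.+1) i)) (fun i => pM _).
have := pM ord_max; nra.
Qed.

Definition axis_gap w e := `|g (w + e) - g w| + `|g (w - e) - g w|.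

Lemma axis_gap_ge0 w e : 0 <= axis_gap w e.
Proof. by rewrite addr_ge0. Qed.

Lemma convex_le_axis_gap w e s : `|s| <= 1 ->
  g (w + s *: e) <= g w + `|s| * axis_gap w e.
Proof.
move=> s1; have [s0|s0] := leP 0 s.
  have := convex_segment_le w (w + e) s0 (le_trans (ler_norm _) s1).
  rewrite [w + e - w]addrC addKr => /le_trans; apply.
  rewrite ger0_norm // lerD2l ler_wpM2l //.
  by apply: le_trans (ler_norm _) _; rewrite lerDl.
have ns0 : 0 <= - s by lra.
have ns1 : - s <= 1 by move: s1; rewrite ltr0_norm.
have := convex_segment_le w (w - e) ns0 ns1.
rewrite [w - e - w]addrC addKr scalerN scaleNr opprK => /le_trans; apply.
rewrite ltr0_norm // lerD2l ler_wpM2l //.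
by apply: le_trans (ler_norm _) _; rewrite lerDr.
Qed.

End ConvexSegment.

Section ConvexContinuous.
Variables (R : realType) (n : nat) (g : 'rV[R]_n.+1 -> R).
Hypothesis g_convex : convex_fun g.
Variable w : 'rV[R]_n.+1.

Let C : R := \sum_(i < n.+1) axis_gap g w (delta_mx 0 i).

Let C_ge0 : 0 <= C.
Proof. by apply: sumr_ge0 => i _; exact: axis_gap_ge0. Qed.

(* w + v is the average of the n+1 points w + ((n+1) v_i) e_i. *)
Lemma convex_le_box (v : 'rV[R]_n.+1) (r : R) :
  (forall i, `|v 0 i| <= r) -> n.+1%:R * r <= 1 ->
  g (w + v) <= g w + n.+1%:R * r * C.
Proof.
move=> vr nr1.
have -> : w + v =
    n.+1%:R^-1 *: \sum_(i < n.+1) (w + (n.+1%:R * v 0 i) *: delta_mx 0 i).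
  rewrite big_split /= sumr_const card_ord -scaler_nat.
  under eq_bigr do rewrite -scalerA.
  by rewrite -scaler_sumr -row_sum_delta -scalerDr scalerA mulVf ?pnatr_eq0 // scale1r.
apply: convex_avg_le => // i.
have r0 : 0 <= r by apply: le_trans (vr i).
have vi1 : `|n.+1%:R * v 0 i| <= 1.
  by rewrite normrM ger0_norm ?ler0n //; apply: le_trans nr1; rewrite ler_wpM2l ?ler0n.
apply: (le_trans (convex_le_axis_gap g_convex _ _ vi1)); rewrite lerD2l.
rewrite normrM ger0_norm ?ler0n //.
apply: ler_pM; rewrite ?mulr_ge0 ?ler0n ?axis_gap_ge0 ?ler_wpM2l ?ler0n //.
by rewrite /C (bigD1 i) //= lerDl; apply: sumr_ge0 => j _; exact: axis_gap_ge0.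
Qed.

Lemma convex_ge_box (v : 'rV[R]_n.+1) (r : R) :
  (forall i, `|v 0 i| <= r) -> n.+1%:R * r <= 1 ->
  g w - n.+1%:R * r * C <= g (w + v).
Proof.
move=> vr nr1.
have : g (w + - v) <= g w + n.+1%:R * r * C.
  by apply: convex_le_box => // i; rewrite mxE normrN.
have half : 1 - 2^-1 = 2^-1 :> R by field.
have half0 : 0 <= 2^-1 :> R by rewrite invr_ge0.
have half1 : 2^-1 <= 1 :> R by rewrite invf_le1 // ler1n.
have := g_convex (w + v) (w - v) half0 half1.
rewrite half -scalerDr addrACA subrr addr0 -mulr2n -scaler_nat scalerA.
by rewrite mulVf ?pnatr_eq0 // scale1r; lra.
Qed.

Import numFieldTopology.Exports numFieldNormedType.Exports.

Lemma convex_continuous_at : {for w, continuous g}.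
Proof.
move=> A /= /nbhs_ballP [e /= e0 eA].
set m := Num.min 1 (e / (C + 1)).
have m0 : 0 < m by rewrite lt_min ltr01 divr_gt0 //; have := C_ge0; lra.
have m1 : m <= 1 by rewrite ge_min lexx.
have me : m * (C + 1) <= e.
  by rewrite -ler_pdivlMr ?ge_min ?lexx ?orbT //; have := C_ge0; lra.
have n0 : 0 < n.+1%:R :> R by rewrite ltr0n.
have nm : n.+1%:R * (m / n.+1%:R) = m by rewrite mulrC mulfVK // gt_eqF.
apply/nbhs_ballP; exists (m / n.+1%:R); first by rewrite /= divr_gt0.
move=> z [_ wz].
have zw : forall i, `|(z - w) 0 i| <= m / n.+1%:R.
  by move=> i; have := wz 0 i; rewrite /ball /= !mxE distrC => /ltW.
have := convex_le_box zw; have := convex_ge_box zw.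
rewrite [w + (z - w)]addrC subrK nm => /(_ m1) lo /(_ m1) up.
apply: eA; rewrite /ball /= ltr_distlC; apply/andP; split; have := C_ge0; nra.
Qed.

End ConvexContinuous.

Import numFieldTopology.Exports numFieldNormedType.Exports.

Lemma convex_continuous (R : realType) d (g : 'rV[R]_d -> R) :
  convex_fun g -> continuous g.
Proof.
case: d g => [|n] g g_convex w; last exact: convex_continuous_at.
move=> A /= /nbhs_ballP [e e0 eA]; apply/nbhs_ballP; exists 1 => //= z _.
have -> : z = w by rewrite (thinmx0 z) (thinmx0 w).
exact/eA/ballxx.
Qed.

Lemma convex_dotpp_sub (R : realType) d (x : 'rV[R]_d) :
  convex_fun (fun z => dotp (x - z) (x - z)).
Proof.
move=> a b t t0 t1; rewrite /dotp !mulr_sumr -big_split /=.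
apply: ler_sum => i _; rewrite !mxE.
set A := x 0 i - a 0 i; set B := x 0 i - b 0 i.
have -> : x 0 i - (t * a 0 i + (1 - t) * b 0 i) = t * A + (1 - t) * B.
  by rewrite /A /B; ring.
have : 0 <= t * (1 - t) by rewrite mulr_ge0 // subr_ge0.
have : 0 <= (A - B) * (A - B) by rewrite -expr2 sqr_ge0.
nra.
Qed.

(* The sublevel set is closed, and its part in the ball of squared radius
   q x0 around x is compact, so the squared distance to x attains its minimum. *)
Lemma exists_nearest_sublevel (R : realType) d (g : 'rV[R]_d -> R) x x0 c :
  convex_fun g -> g x0 <= c -> exists w, g w <= c /\
  forall z, g z <= c -> dotp (x - w) (x - w) <= dotp (x - z) (x - z).
Proof.
move=> g_convex x0c; set q := fun z => dotp (x - z) (x - z).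
have gC := convex_continuous g_convex.
have qC := convex_continuous (convex_dotpp_sub x).
set A := [set z | g z <= c /\ q z <= q x0].
have A_closed : closed A.
  have -> : A = g @^-1` [set r | r <= c] `&` q @^-1` [set r | r <= q x0] by [].
  apply: closedI; apply: preimage_closed; try exact: closed_le.
    by move=> z _; exact: gC.
  by move=> z _; exact: qC.
have A_compact : compact A.
  apply: (subclosed_compact A_closed (rV_compact
    (A := fun i => `[x 0 i - (q x0 + 1), x 0 i + (q x0 + 1)]%classic) _)).
    by move=> i; exact: segment_compact.
  move=> z [_ qz] i /=; rewrite in_itv /=.
  have := dotpp_coord_le (x - z) i; rewrite !mxE => /le_trans/(_ qz) xz.
  have : 0 <= (x 0 i - z 0 i) * (x 0 i - z 0 i) by rewrite -expr2 sqr_ge0.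
  by move=> ?; apply/andP; split; nra.
have [|w /set_mem [wc wq] w_min] := EVT_min_rV _ A_compact (continuous_subspaceT qC).
  by exists x0.
exists w; split => // z zc; have [zq|zq] := leP (q z) (q x0).
  by apply: w_min; apply/mem_set.
exact: le_trans wq (ltW zq).
Qed.

Section NearestPoint.
Variables (R : realType) (d : nat) (g : 'rV[R]_d -> R) (c : R) (x w : 'rV[R]_d).
Hypothesis g_convex : convex_fun g.
Hypothesis gw : g w <= c.
Hypothesis w_nearest :
  forall z, g z <= c -> dotp (x - w) (x - w) <= dotp (x - z) (x - z).
Hypothesis gx : c < g x.

Let u := x - w.

Let u_neq0 : u != 0.
Proof. by rewrite subr_eq0; apply: contraTneq gx => ->; rewrite -leNgt. Qed.

Let dotpuu_gt0 : 0 < dotp u u.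
Proof. exact: dotpp_gt0 u_neq0. Qed.

Lemma nearest_normal z : g z <= c -> dotp u (z - w) <= 0.
Proof.
move=> gz; set v := z - w; rewrite leNgt; apply/negP => uv.
have vv := dotpp_ge0 v.
set t := Num.min 1 (dotp u v / (dotp v v + 1)).
have t0 : 0 < t by rewrite lt_min ltr01 divr_gt0 //; lra.
have t1 : t <= 1 by rewrite ge_min lexx.
have tv : t * (dotp v v + 1) <= dotp u v.
  by rewrite -ler_pdivlMr ?ge_min ?lexx ?orbT //; lra.
have : g (w + t *: v) <= c.
  apply: le_trans (convex_segment_le g_convex w z (ltW t0) t1) _.
  have : 0 <= t * (c - g z) by rewrite mulr_ge0 ?subr_ge0 // ltW.
  have : 0 <= (1 - t) * (c - g w) by rewrite mulr_ge0 ?subr_ge0.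
  lra.
move/w_nearest; rewrite opprD addrA dotpp_subrZ; nra.
Qed.

Lemma nearest_on_level : g w = c.
Proof.
apply/eqP; rewrite eq_le gw leNgt; apply/negP => /(convex_segment_lt g_convex x).
move=> [t [/andP [t0 t1] /ltW /nearest_normal]].
by rewrite addrC addKr dotpZr -/u; have := dotpuu_gt0; nra.
Qed.

Lemma nearest_halfspace_ge z : 0 <= dotp u (z - w) -> c <= g z.
Proof.
move=> uz; rewrite leNgt; apply/negP => /(convex_segment_lt g_convex (z + u)).
move=> [t [/andP [t0 t1] /ltW /nearest_normal]].
rewrite [z + u - z]addrC addKr addrAC dotpDr dotpZr; have := dotpuu_gt0; nra.
Qed.

(* The hyperplane <u, . - w> = 0 lies above level c and g is convex, so slopes
   measured on its negative side never exceed those on its positive side. *)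
Lemma nearest_slope_le y z : dotp u (y - w) < 0 -> 0 < dotp u (z - w) ->
  (g y - c) / dotp u (y - w) <= (g z - c) / dotp u (z - w).
Proof.
set a := dotp u (y - w); set b := dotp u (z - w) => a0 b0.
have ba : 0 < b - a by lra.
set t := a / (a - b).
have t0 : 0 <= t by rewrite /t ler_ndivlMr ?mul0r; lra.
have t1 : t <= 1 by rewrite /t ler_ndivrMr; lra.
have ta : t * (b - a) = - a by rewrite /t; field; rewrite ltr0_neq0 // subr_lt0; lra.
have : c <= g (y + t *: (z - y)).
  apply: nearest_halfspace_ge.
  have -> : y + t *: (z - y) - w = (y - w) + t *: ((z - w) - (y - w)).
    by rewrite opprB addrA subrK addrAC.
  by rewrite dotpDr dotpZr (dotpBr (z - w)) -/a -/b ta addrN.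
move/le_trans/(_ (convex_segment_le g_convex y z t0 t1)) => hc; clearbody t.
rewrite ler_pdivlMr // mulrAC ler_ndivrMr //.
have : 0 <= (b - a) * (g y - c + t * (g z - g y)) by rewrite mulr_ge0 //; lra.
by rewrite mulrDr mulrA [(b - a) * t]mulrC ta; nra.
Qed.

Let slopes := [set (g z - c) / dotp u (z - w) | z in [set z | 0 < dotp u (z - w)]].

Let slopes_ge0 r : slopes r -> 0 <= r.
Proof.
move=> [z /= uz <-]; rewrite divr_ge0 ?(ltW uz) // subr_ge0.
exact/nearest_halfspace_ge/ltW.
Qed.

Let lam := inf slopes.

Lemma nearest_subgrad : subgrad g w (lam *: u).
Proof.
move=> y; rewrite nearest_on_level dotpZl; set a := dotp u (y - w).
have slopes_lb : has_lbound slopes by exists 0 => r /slopes_ge0.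
have [a0|a0|a0] := ltgtP a 0.
- have : (g y - c) / a <= lam.
    apply: lb_le_inf; first by exists ((g x - c) / dotp u (x - w)), x.
    by move=> r [z /= uz <-]; exact: nearest_slope_le.
  by rewrite ler_ndivrMr // => ?; lra.
- have : lam <= (g y - c) / a by apply: ge_inf => //; exists y.
  by rewrite ler_pdivlMr // => ?; lra.
- by rewrite a0 mulr0 addr0; apply: nearest_halfspace_ge; rewrite -/a a0.
Qed.

Lemma nearest_subgrad_bound :
  exists s, subgrad g w s /\ enorm s * enorm (x - w) <= g x - c.
Proof.
exists (lam *: u); split; first exact: nearest_subgrad.
have lam0 : 0 <= lam.
  by apply: lb_le_inf => [|r /slopes_ge0 //]; exists ((g x - c) / dotp u u), x.
have : lam <= (g x - c) / dotp u u by apply: ge_inf; [exists 0 | exists x].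
rewrite enormZ ger0_norm // -mulrA -expr2 enorm_sqr ler_pdivlMr //.
Qed.

End NearestPoint.

Lemma dist_sublevel_le_segment (R : realType) d (g : 'rV[R]_d -> R) x w eps rho :
  convex_fun g -> g w <= - eps -> rho <= eps -> - rho < g x ->
  dist x (sublevel g rho) <= (g x + rho) / (g x + eps) * enorm (x - w).
Proof.
move=> g_convex gw re gx; set t := (g x + rho) / (g x + eps).
have gxe : 0 < g x + eps by lra.
have t0 : 0 <= t by rewrite divr_ge0 //; lra.
have t1 : t <= 1 by rewrite ler_pdivrMr // mul1r; lra.
have gp : g (x + t *: (w - x)) <= - rho.
  apply: le_trans (convex_segment_le g_convex x w t0 t1) _.
  have : t * (g w - g x) <= t * (- eps - g x) by rewrite ler_wpM2l //; lra.
  have : t * (- eps - g x) = - (g x + rho) by rewrite /t; field; rewrite gt_eqF.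
  lra.
have := @dist_le_enorm _ _ x _ (sublevel g rho) gp.
by rewrite opprD addNKr -scalerN opprB enormZ ger0_norm.
Qed.

Unset Implicit Arguments.
Local Close Scope classical_set_scope.

Theorem lemma1 (R : realType) (d : nat) (g : 'rV[R]_d -> R) (Rad : R)
  (Gg sigma eps rho : R) :
  convex_fun g ->
  0 < Rad ->
  (forall x, g x <= 0 -> enorm x <= Rad) ->
  (* (A3) *)
  0 < Gg ->
  (forall x s, enorm x <= Rad -> subgrad g x s -> enorm s <= Gg) ->
  (* (A4) *)
  0 < sigma -> 0 < eps ->
  (exists x, g x = - eps) ->
  (forall x s, g x = - eps -> subgrad g x s -> sigma <= enorm s) ->
  0 <= rho -> rho <= eps ->
  forall x : 'rV[R]_d, enorm x <= Rad ->
    dist x (sublevel g rho) <= sigma^-1 * Num.max (g x + rho) 0.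
Proof.
move=> g_convex _ _ _ _ sigma0 _ [x0 gx0] A4 rho0 re x _.
have [gxr|gxr] := leP (g x) (- rho).
  apply: le_trans (dist_le_enorm x gxr) _.
  rewrite subrr enorm0 mulr_ge0 ?le_max ?lexx ?orbT // invr_ge0.
  exact: ltW.
have gxe : - eps < g x by lra.
have /(exists_nearest_sublevel x g_convex) [w [gw w_nearest]] : g x0 <= - eps.
  by rewrite gx0.
have [s [ws sw]] := nearest_subgrad_bound g_convex gw w_nearest gxe.
have sigma_w : sigma * enorm (x - w) <= g x + eps.
  rewrite -[eps]opprK; apply: le_trans sw.
  have := A4 _ _ (nearest_on_level g_convex gw w_nearest gxe) ws.
  by move/(ler_wpM2r (enorm_ge0 (x - w))).
apply: le_trans (dist_sublevel_le_segment g_convex gw re gxr) _.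
have gxr0 : 0 <= g x + rho by lra.
have gxe0 : 0 < g x + eps by lra.
rewrite (max_idPl gxr0) mulrAC ler_pdivrMr // [_ * enorm _]mulrC mulrAC.
apply: (ler_wpM2r gxr0).
by rewrite mulrC ler_pdivlMr // mulrC.
Qed.
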